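(* Let $((\mathcal G,\Theta),\mathfrak g_1,\mathfrak g_2)$ be a twilled Lie triple system and $H:\mathfrak g_2\to\mathfrak g_1$ a linear map. Then the twisting $((\mathcal G,\Theta^H),\mathfrak g_1,\mathfrak g_2)$ is also a twilled Lie triple system (i.e. $\mathfrak g_1$ and $\mathfrak g_2$ are subalgebras for the bracket $\Theta^H$) if and only if $H\in C^0_{\mathsf{LTS}}(\mathfrak g_2,\mathfrak g_1)$ is a Maurer–Cartan element of the $L_\infty$-algebra $(C^*_{\mathsf{LTS}}(\mathfrak g_2,\mathfrak g_1),l_1,l_2,l_3)$, i.e. $$l_1(H)+\tfrac12 l_2(H,H)+\tfrac1{3!}l_3(H,H,H)=0,$$ where $l_1(f)=[\hat\mu_2,\hat f]_{\mathsf{LTS}}$, $l_2(f,g)=[[\hat\psi,\hat f]_{\mathsf{LTS}},\hat g]_{\mathsf{LTS}}$, $l_3(f,g,h)=[[[\hat\mu_1,\hat f]_{\mathsf{LTS}},\hat g]_{\mathsf{LTS}},\hat h]_{\mathsf{LTS}}$.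
   Context: All vector spaces are over a field $\mathbb K$ of characteristic $0$. A Lie triple system is a vector space with a trilinear bracket $[\cdot,\cdot,\cdot]$ satisfying $[x,x,y]=0$, $[x,y,z]+[y,z,x]+[z,x,y]=0$ and $[x,y,[z,w,t]]=[[x,y,z],w,t]+[z,[x,y,w],t]+[z,w,[x,y,t]]$; a subalgebra is a subspace closed under the bracket. Cochains: $C^p(\mathfrak g,\mathfrak g)=\mathrm{Hom}(\otimes^{2p+1}\mathfrak g,\mathfrak g)$ (degree $p$), arguments written $(\mathfrak X_1,\dots,\mathfrak X_p,x)$, $\mathfrak X_i=x_i\otimes y_i$. For $P\in C^p,Q\in C^q$: $(P\circ Q)(\mathfrak X_1,\dots,\mathfrak X_{p+q},x)=\sum_{k=1}^p(-1)^{(k-1)q}\sum_{\sigma\in\mathbb S(k-1,q)}(-1)^\sigma P(\mathfrak X_{\sigma(1)},\dots,\mathfrak X_{\sigma(k-1)},Q(\mathfrak X_{\sigma(k)},\dots,\mathfrak X_{\sigma(k+q-1)},x_{k+q})\otimes y_{k+q},\mathfrak X_{k+q+1},\dots,\mathfrak X_{p+q},x)+\sum_{k=1}^p(-1)^{(k-1)q}\sum_{\sigma\in\mathbb S(k-1,q)}(-1)^\sigma P(\mathfrak X_{\sigma(1)},\dots,\mathfrak X_{\sigma(k-1)},x_{k+q}\otimes Q(\mathfrak X_{\sigma(k)},\dots,\mathfrak X_{\sigma(k+q-1)},y_{k+q}),\mathfrak X_{k+q+1},\dots,\mathfrak X_{p+q},x)+\sum_{\sigma\in\mathbb S(p,q)}(-1)^\sigma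 P(\mathfrak X_{\sigma(1)},\dots,\mathfrak X_{\sigma(p)},Q(\mathfrak X_{\sigma(p+1)},\dots,\mathfrak X_{\sigma(p+q)},x))$ ($\mathbb S(i,j)$ = shuffles), $[P,Q]=P\circ Q-(-1)^{pq}Q\circ P$. $C^p_{\mathsf{LTS}}$ is the subspace of $P$ with $P(\dots,x,x,y)=0$ and vanishing cyclic sum in the last three arguments ($C^0_{\mathsf{LTS}}=\mathrm{Hom}(\mathfrak g,\mathfrak g)$), a graded Lie subalgebra with bracket $[\cdot,\cdot]_{\mathsf{LTS}}$; $\Theta\in C^1_{\mathsf{LTS}}$ is a Lie triple system bracket iff $[\Theta,\Theta]_{\mathsf{LTS}}=0$. $C^p_{\mathsf{LTS}}(\mathfrak g_2,\mathfrak g_1)$: maps $\otimes^{2p+1}\mathfrak g_2\to\mathfrak g_1$ with the same symmetries; its lift $\hat f$ to $\mathcal G=\mathfrak g_1\oplus\mathfrak g_2$ equals $f$ on $\otimes^{2p+1}\mathfrak g_2$ and vanishes on all other tensor summands; e.g. for $H:\mathfrak g_2\to\mathfrak g_1$, $\hat H(x,u)=(H(u),0)$. Twilled Lie triple system: Lie triple system $(\mathcal G,\Theta=[\cdot,\cdot,\cdot]_{\mathcal G})$, $\mathcal G=\mathfrak g_1\oplus\mathfrak g_2$, with $\mathfrak g_1,\mathfrak g_2$ subalgebras. With $[a,b,c]_i$ the $\mathfrak g_i$-component and $x,y,z\in\mathfrak g_1$, $u,v,w\in\mathfrak g_2$: $\hat\mu_1((x,u),(y,v),(z,w))=([x,y,z]_1,[x,y,w]_2+[u,y,z]_2-[v,x,z]_2)$,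 $\hat\psi((x,u),(y,v),(z,w))=([x,y,w]_1+[u,y,z]_1-[v,x,z]_1,[u,v,z]_2+[x,v,w]_2-[y,u,w]_2)$, $\hat\mu_2((x,u),(y,v),(z,w))=([u,v,z]_1+[x,v,w]_1-[y,u,w]_1,[u,v,w]_2)$. Twisting: $X_{\hat H}(\cdot)=[\cdot,\hat H]_{\mathsf{LTS}}$ and $\Theta^H=\sum_{k\ge0}\frac1{k!}X_{\hat H}^k(\Theta)$ (a finite sum). $L_\infty$-algebra: graded space with graded-symmetric degree $+1$ maps $l_k$ satisfying the generalized Jacobi identities; here $C^p_{\mathsf{LTS}}(\mathfrak g_2,\mathfrak g_1)$ has degree $p$, $l_k=0$ for $k\ge4$, and the values of $l_1,l_2,l_3$ (lifts of maps $\otimes^\bullet\mathfrak g_2\to\mathfrak g_1$) are identified with elements of $C^*_{\mathsf{LTS}}(\mathfrak g_2,\mathfrak g_1)$. A Maurer–Cartan element is a degree-$0$ element $\alpha$ with $\sum_k\frac1{k!}l_k(\alpha,\dots,\alpha)=0$. *)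

From HB Require Import structures.
From mathcomp Require Import all_boot all_order all_algebra.
Set Implicit Arguments. Unset Strict Implicit. Unset Printing Implicit Defensive.
Import Order.TTheory GRing.Theory Num.Theory.
Local Open Scope ring_scope.

Section LTS.
Variable K : fieldType.

Definition trilinear (V W : lmodType K) (f : V -> V -> V -> W) : Prop :=
  (forall (k : K) u v b c, f (k *: u + v) b c = k *: f u b c + f v b c) /\
  (forall (k : K) a u v c, f a (k *: u + v) c = k *: f a u c + f a v c) /\
  (forall (k : K) a b u v, f a b (k *: u + v) = k *: f a b u + f a b v).

Definition is_LTS (V : lmodType K) (br : V -> V -> V -> V) : Prop :=
  trilinear br /\
  (forall x y, br x x y = 0) /\
  (forall x y z, br x y z + br y z x + br z x y = 0) /\
  (forall x y z w t,
      br x y (br z w t) = br (br x y z) w t + br z (br x y w) t + br z w (br x y t)).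

Definition subalgebra (V : lmodType K) (br : V -> V -> V -> V) (S : V -> Prop) : Prop :=
  S 0 /\ (forall (k : K) u v, S u -> S v -> S (k *: u + v)) /\
  (forall a b c, S a -> S b -> S c -> S (br a b c)).

Variables g1 g2 : lmodType K.
Local Notation G := (g1 * g2)%type.

Definition tri_op := G -> G -> G -> G.

Definition in_g1 (a : G) : Prop := a.2 = 0.
Definition in_g2 (a : G) : Prop := a.1 = 0.

Definition twilled (Th : tri_op) : Prop :=
  is_LTS Th /\ subalgebra Th in_g1 /\ subalgebra Th in_g2.

Definition hat (H : g2 -> g1) : G -> G := fun a => (H a.2, 0).

(* the bracket [P,Q]_LTS for P in C^1 and Q in C^0 (unfolded from the
   general formula: P∘Q - Q∘P) *)
Definition br10 (P : tri_op) (Q : G -> G) : tri_op :=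
  fun a b c => P (Q a) b c + P a (Q b) c + P a b (Q c) - Q (P a b c).

Definition XH (H : g2 -> g1) (P : tri_op) : tri_op := br10 P (hat H).

(* Theta^H = sum_k 1/k! X_H^k(Theta); terms with k >= 4 vanish *)
Definition twist (Th : tri_op) (H : g2 -> g1) : tri_op :=
  fun a b c => \sum_(k < 4) ((k`!)%:R)^-1 *: iter k (XH H) Th a b c.

Definition emb1 (x : g1) : G := (x, 0).
Definition emb2 (u : g2) : G := (0, u).

Definition mu1 (Th : tri_op) : tri_op := fun a b c =>
  let: (x, u) := a in let: (y, v) := b in let: (z, w) := c in
  ((Th (emb1 x) (emb1 y) (emb1 z)).1,
   (Th (emb1 x) (emb1 y) (emb2 w)).2 + (Th (emb2 u) (emb1 y) (emb1 z)).2
     - (Th (emb2 v) (emb1 x) (emb1 z)).2).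

Definition psi (Th : tri_op) : tri_op := fun a b c =>
  let: (x, u) := a in let: (y, v) := b in let: (z, w) := c in
  ((Th (emb1 x) (emb1 y) (emb2 w)).1 + (Th (emb2 u) (emb1 y) (emb1 z)).1
     - (Th (emb2 v) (emb1 x) (emb1 z)).1,
   (Th (emb2 u) (emb2 v) (emb1 z)).2 + (Th (emb1 x) (emb2 v) (emb2 w)).2
     - (Th (emb1 y) (emb2 u) (emb2 w)).2).

Definition mu2 (Th : tri_op) : tri_op := fun a b c =>
  let: (x, u) := a in let: (y, v) := b in let: (z, w) := c in
  ((Th (emb2 u) (emb2 v) (emb1 z)).1 + (Th (emb1 x) (emb2 v) (emb2 w)).1
     - (Th (emb1 y) (emb2 u) (emb2 w)).1,
   (Th (emb2 u) (emb2 v) (emb2 w)).2).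

(* the L_infinity brackets (values as lifted maps on G) *)
Definition l1 (Th : tri_op) (f : g2 -> g1) : tri_op := br10 (mu2 Th) (hat f).
Definition l2 (Th : tri_op) (f g : g2 -> g1) : tri_op :=
  br10 (br10 (psi Th) (hat f)) (hat g).
Definition l3 (Th : tri_op) (f g h : g2 -> g1) : tri_op :=
  br10 (br10 (br10 (mu1 Th) (hat f)) (hat g)) (hat h).

Definition maurer_cartan (Th : tri_op) (H : g2 -> g1) : Prop :=
  forall a b c : G,
    l1 Th H a b c + (2%:R)^-1 *: l2 Th H H a b c
      + ((3`!)%:R)^-1 *: l3 Th H H H a b c = 0.

End LTS.

From HB Require Import structures.
From mathcomp Require Import all_boot all_order all_algebra.
From Stdlib Require Import FunctionalExtensionality.

(* Because [hat H] is square-zero and kills [g1], which contains its image, the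
   series [e^(X_hat H) Theta] stops after [k = 3] and is the bracket transported
   along the automorphism [1 + hat H] of [G]:
   [Theta^H a b c = (1 - hat H) (Theta ((1 + hat H) a) ((1 + hat H) b) ((1 + hat H) c))].
   So [Theta^H] is always a Lie triple system and [g1] stays a subalgebra.
   Since [X^k P] only evaluates [P] at [hat H]-iterates of its arguments, [X^k P] is
   [k!] times the part of degree [k] in [hat H]; by bidegree, only [mu2], [psi] and
   [mu1] contribute to the [g2 x g2 x g2 -> g1] component of [X Theta], [X^2 Theta]
   and [X^3 Theta] respectively, so [l1 H + l2 H H / 2 + l3 H H H / 6] is exactly
   that component of [Theta^H], whose vanishing means that [g2] is a subalgebra. *)

Set Implicit Arguments.
Unset Strict Implicit.
Unset Printing Implicit Defensive.
Import GRing.Theory.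
Local Open Scope ring_scope.

Inductive zmod_expr := ZAtom of nat | ZAdd of zmod_expr & zmod_expr
  | ZOpp of zmod_expr | ZZero.

Fixpoint signed_atoms (e : zmod_expr) : seq nat * seq nat :=
  match e with
  | ZAtom i => ([:: i], [::])
  | ZAdd e1 e2 => let: (p1, n1) := signed_atoms e1 in
                  let: (p2, n2) := signed_atoms e2 in (p1 ++ p2, n1 ++ n2)
  | ZOpp e1 => let: (p, n) := signed_atoms e1 in (n, p)
  | ZZero => ([::], [::])
  end.

Section ZmodExpr.
Variables (V : zmodType) (atoms : seq V).

Fixpoint zmod_eval (e : zmod_expr) : V :=
  match e with
  | ZAtom i => atoms`_i
  | ZAdd e1 e2 => zmod_eval e1 + zmod_eval e2
  | ZOpp e1 => - zmod_eval e1
  | ZZero => 0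
  end.

Lemma zmod_evalE e :
  let: (p, n) := signed_atoms e in
  zmod_eval e = \sum_(i <- p) atoms`_i - \sum_(i <- n) atoms`_i.
Proof.
elim: e => [i | e1 + e2 + | e1 + |] /=.
- by rewrite big_seq1 big_nil subr0.
- case: (signed_atoms e1) => p1 n1 ->; case: (signed_atoms e2) => p2 n2 ->.
  by rewrite !big_cat opprD addrACA.
- by case: (signed_atoms e1) => p n ->; rewrite opprB.
- by rewrite !big_nil subrr.
Qed.

Lemma zmod_eval_eq0 e :
  perm_eq (signed_atoms e).1 (signed_atoms e).2 -> zmod_eval e = 0.
Proof.
have := zmod_evalE e; case: (signed_atoms e) => p n /= -> pn.
by rewrite (perm_big _ pn) subrr.
Qed.

End ZmodExpr.

(* Rewriting may leave convertible but syntactically different instance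
   arguments in equal atoms, hence the conversion test. *)
Ltac atom_index t l := match l with
  | t :: _ => constr:(0%N)
  | ?x :: _ => let _ := constr:(erefl x : x = t) in constr:(0%N)
  | _ :: ?r => let k := atom_index t r in constr:(S k)
  end.
Ltac add_atom t l := match constr:(tt) with
  | _ => let _ := atom_index t l in l
  | _ => constr:(t :: l)
  end.
Ltac collect_atoms e l := match e with
  | ?a + ?b => let l := collect_atoms a l in collect_atoms b l
  | - ?a => collect_atoms a l
  | 0 => l
  | ?t => add_atom t l
  end.
Ltac reify_zmod e l := match e with
  | ?a + ?b => let x := reify_zmod a l in let y := reify_zmod b l in constr:(ZAdd x y)
  | - ?a => let x := reify_zmod a l in constr:(ZOpp x)
  | 0 => constr:(ZZero)
  | ?t => let i := atom_index t l in constr:(ZAtom i)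
  end.

Ltac cancel_terms :=
  apply: subr0_eq;
  match goal with |- ?e = 0 =>
    let V := type of e in
    let l := collect_atoms e (@nil V) in
    let t := reify_zmod e l in
    change (zmod_eval l t = 0); apply: zmod_eval_eq0; reflexivity
  end.

Section Trilinear.
Variables (K : fieldType) (V W : lmodType K).

Lemma additive_of_linear_comb (f : V -> W) :
  (forall k u v, f (k *: u + v) = k *: f u + f v) ->
  [/\ f 0 = 0, {morph f : u v / u + v} & {morph f : u / - u}].
Proof.
move=> fL; have fD u v : f (u + v) = f u + f v by rewrite -{1}[u]scale1r fL scale1r.
have f0 : f 0 = 0 by apply: (addrI (f 0)); rewrite -fD !addr0.
by split=> // u; apply: (addrI (f u)); rewrite -fD !subrr.
Qed.

Variables (Th : V -> V -> V -> W) (ThL : trilinear Th).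

Let additive1 b c := additive_of_linear_comb (f := fun a => Th a b c) (fun k u v => ThL.1 k u v b c).
Let additive2 a c := additive_of_linear_comb (f := fun b => Th a b c) (fun k u v => ThL.2.1 k a u v c).
Let additive3 a b := additive_of_linear_comb (f := Th a b) (fun k u v => ThL.2.2 k a b u v).

Lemma trilin0l b c : Th 0 b c = 0. Proof. by case: (additive1 b c). Qed.
Lemma trilin0m a c : Th a 0 c = 0. Proof. by case: (additive2 a c). Qed.
Lemma trilin0r a b : Th a b 0 = 0. Proof. by case: (additive3 a b). Qed.
Lemma trilinDl a a' b c : Th (a + a') b c = Th a b c + Th a' b c.
Proof. by case: (additive1 b c). Qed.
Lemma trilinDm a b b' c : Th a (b + b') c = Th a b c + Th a b' c.
Proof. by case: (additive2 a c). Qed.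
Lemma trilinDr a b c c' : Th a b (c + c') = Th a b c + Th a b c'.
Proof. by case: (additive3 a b). Qed.
Lemma trilinNl a b c : Th (- a) b c = - Th a b c.
Proof. by case: (additive1 b c). Qed.
Lemma trilinNm a b c : Th a (- b) c = - Th a b c.
Proof. by case: (additive2 a c). Qed.
Lemma trilinNr a b c : Th a b (- c) = - Th a b c.
Proof. by case: (additive3 a b). Qed.

End Trilinear.

Definition vanish_at0 (V W : zmodType) (P : V -> V -> V -> W) :=
  [/\ forall b c, P 0 b c = 0, forall a c, P a 0 c = 0 & forall a b, P a b 0 = 0].

Lemma trilinear_vanish_at0 (K : fieldType) (V W : lmodType K) (P : V -> V -> V -> W) :
  trilinear P -> vanish_at0 P.
Proof. by move=> PL; split; [exact: trilin0l | exact: trilin0m | exact: trilin0r]. Qed.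

Section Transport.
Variables (K : fieldType) (V : lmodType K) (phi psi : V -> V).
Hypotheses (phiL : forall k u v, phi (k *: u + v) = k *: phi u + phi v)
           (psiL : forall k u v, psi (k *: u + v) = k *: psi u + psi v)
           (phiK : cancel psi phi).

Definition transport (Th : V -> V -> V -> V) : V -> V -> V -> V :=
  fun a b c => psi (Th (phi a) (phi b) (phi c)).

Lemma is_LTS_transport Th : is_LTS Th -> is_LTS (transport Th).
Proof.
case: (additive_of_linear_comb psiL) => psi0 psiD _.
case=> [[Th1 [Th2 Th3]] [ThA [ThC ThJ]]]; rewrite /transport.
split; [split; [|split]|split; [|split]].
- by move=> k u v b c; rewrite phiL Th1 psiL.
- by move=> k a u v c; rewrite phiL Th2 psiL.
- by move=> k a b u v; rewrite phiL Th3 psiL.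
- by move=> x y; rewrite ThA psi0.
- by move=> x y z; rewrite -!psiD ThC psi0.
- by move=> x y z w t; rewrite !phiK ThJ -!psiD.
Qed.

End Transport.

Lemma scale_inv_natr_mulrn (K : fieldType) (V : lmodType K) (n : nat) (x : V) :
  [pchar K] =i pred0 -> n != 0%N -> (n%:R)^-1 *: (x *+ n) = x.
Proof.
move=> K0 n0; rewrite -scaler_nat scalerA mulVf ?scale1r //.
by rewrite ((pcharf0P K).1 K0).
Qed.

Lemma sum_inv_fact4 (K : fieldType) (V : lmodType K) (F : nat -> V) :
  \sum_(k < 4) (k`!%:R)^-1 *: F k
  = F 0%N + F 1%N + (2%:R)^-1 *: F 2%N + (6%:R)^-1 *: F 3%N.
Proof. by rewrite !big_ord_recr big_ord0 /= add0r invr1 !scale1r. Qed.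

Section SquareZero.
Variables (K : fieldType) (V : lmodType K) (N : V -> V).
Hypotheses (NL : forall k u v, N (k *: u + v) = k *: N u + N v)
           (NN : forall a, N (N a) = 0).

Lemma idDN_linear k u v :
  (k *: u + v) + N (k *: u + v) = k *: (u + N u) + (v + N v).
Proof. by rewrite NL scalerDr; cancel_terms. Qed.

Lemma idBN_linear k u v :
  (k *: u + v) - N (k *: u + v) = k *: (u - N u) + (v - N v).
Proof. by rewrite NL scalerDr scalerN; cancel_terms. Qed.

Lemma idBNK : cancel (fun r => r - N r) (fun a => a + N a).
Proof.
case: (additive_of_linear_comb NL) => _ ND NN' r.
by rewrite ND NN' NN; cancel_terms.
Qed.

End SquareZero.

Section SquareZeroIterates.
Variables (K : fieldType) (g1 g2 : lmodType K).
Local Notation G := (g1 * g2)%type.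
Variables (N : G -> G) (P : tri_op g1 g2).
Hypotheses (NL : forall k u v, N (k *: u + v) = k *: N u + N v)
           (NN : forall a, N (N a) = 0) (P0 : vanish_at0 P).

Local Notation X := (fun Q => br10 Q N).

Definition twist_deg2 a b c :=
  P (N a) (N b) c + P (N a) b (N c) + P a (N b) (N c)
  - N (P (N a) b c + P a (N b) c + P a b (N c)).
Definition twist_deg3 a b c :=
  P (N a) (N b) (N c)
  - N (P (N a) (N b) c + P (N a) b (N c) + P a (N b) (N c)).

Let N0 : N 0 = 0. Proof. by case: (additive_of_linear_comb NL). Qed.
Let ND : {morph N : u v / u + v}. Proof. by case: (additive_of_linear_comb NL). Qed.
Let NN' : {morph N : u / - u}. Proof. by case: (additive_of_linear_comb NL). Qed.
Let P0l b c : P 0 b c = 0. Proof. by case: P0. Qed.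
Let P0m a c : P a 0 c = 0. Proof. by case: P0. Qed.
Let P0r a b : P a b 0 = 0. Proof. by case: P0. Qed.

Ltac expand_iterates :=
  rewrite ?(ND, NN', NN, N0, P0l, P0m, P0r, opprK, oppr0, addr0, add0r).

(* X^k P only evaluates P at arguments [N^i a, N^j b, N^l c]: no additivity of P is needed. *)
Lemma iter2_br10 a b c : iter 2 X P a b c = twist_deg2 a b c *+ 2.
Proof. rewrite /= /br10 /twist_deg2 mulr2n; expand_iterates; cancel_terms. Qed.

Lemma iter3_br10 a b c : iter 3 X P a b c = twist_deg3 a b c *+ 6.
Proof. rewrite /= /br10 /twist_deg3 !mulrS mulr0n; expand_iterates; cancel_terms. Qed.

End SquareZeroIterates.

Section SquareZeroTwist.
Variables (K : fieldType) (g1 g2 : lmodType K).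
Local Notation G := (g1 * g2)%type.
Variables (N : G -> G) (Th : tri_op g1 g2).
Hypotheses (NL : forall k u v, N (k *: u + v) = k *: N u + N v)
           (NN : forall a, N (N a) = 0) (ThL : trilinear Th)
           (N_Th_N : forall a b c, N (Th (N a) (N b) (N c)) = 0).

Local Notation X := (fun Q => br10 Q N).

Lemma transport_square_zero a b c :
  transport (fun a => a + N a) (fun r => r - N r) Th a b c
  = Th a b c + br10 Th N a b c + twist_deg2 N Th a b c + twist_deg3 N Th a b c.
Proof.
case: (additive_of_linear_comb NL) => N0 ND NN'.
rewrite /transport /br10 /twist_deg2 /twist_deg3.
rewrite ?(trilinDl ThL, trilinDm ThL, trilinDr ThL, ND, NN', NN, N_Th_N).
cancel_terms.
Qed.

Lemma exp_br10_transport (K0 : [pchar K] =i pred0) a b c :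
  \sum_(k < 4) (k`!%:R)^-1 *: iter k X Th a b c
  = transport (fun a => a + N a) (fun r => r - N r) Th a b c.
Proof.
have Th0 := trilinear_vanish_at0 ThL.
rewrite (sum_inv_fact4 (fun k => iter k X Th a b c)) transport_square_zero.
by rewrite (iter2_br10 NL NN Th0) (iter3_br10 NL NN Th0) !scale_inv_natr_mulrn.
Qed.

End SquareZeroTwist.

Lemma pair_fst_mulrn (V W : zmodType) (p : V * W) n :
  ((p *+ n).1, 0) = (p.1, 0) *+ n :> V * W.
Proof. by apply: injective_projections; rewrite /= ?(raddfMn fst, raddfMn snd) /= ?mul0rn. Qed.

Section TwilledTwist.
Variables (K : fieldType) (g1 g2 : lmodType K).
Local Notation G := (g1 * g2)%type.
Local Notation E := (emb1 g2).
Local Notation F := (emb2 g1).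
Variables (Th : tri_op g1 g2) (H : {linear g2 -> g1}).

Lemma hat_linear k a b : hat H (k *: a + b) = k *: hat H a + hat H b.
Proof. by apply: injective_projections; rewrite /= ?linearP ?scaler0 ?addr0. Qed.

Lemma hatK a : hat H (hat H a) = 0.
Proof. by rewrite /hat /= raddf0. Qed.

Lemma hat_in_g1 a : in_g1 a -> hat H a = 0.
Proof. by rewrite /hat => ->; rewrite raddf0. Qed.

Lemma subalgebra_in_g1_transport (P : tri_op g1 g2) :
  subalgebra P (@in_g1 K g1 g2) ->
  subalgebra (transport (fun a => a + hat H a) (fun r => r - hat H r) P) (@in_g1 K g1 g2).
Proof.
case=> P0 [PL P1]; split=> //; split=> // a b c a1 b1 c1.
by rewrite /transport !hat_in_g1 ?addr0 // /in_g1 /= ?subr0; apply: P1.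
Qed.

Lemma subalgebra_in_g2P (P : tri_op g1 g2) :
  subalgebra P (@in_g2 K g1 g2) <-> forall u v w, (P (F u) (F v) (F w)).1 = 0.
Proof.
split=> [[_ [_ P2]] u v w | P2]; first exact: P2.
split=> //; split=> [k a b | [x u] [y v] [z w]]; rewrite /in_g2 /=.
  by move=> -> ->; rewrite scaler0 addr0.
by move=> -> -> ->; apply: P2.
Qed.

Lemma pairE (x : g1) (u : g2) : (x, u) = E x + F u.
Proof. by apply: injective_projections; rewrite /= ?addr0 ?add0r. Qed.

Lemma emb1D (x y : g1) : E (x + y) = E x + E y.
Proof. by apply: injective_projections; rewrite /= ?addr0. Qed.
Lemma emb1N (x : g1) : E (- x) = - E x.
Proof. by apply: injective_projections; rewrite /= ?oppr0. Qed.
Lemma emb2D (u v : g2) : F (u + v) = F u + F v.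
Proof. by apply: injective_projections; rewrite /= ?addr0. Qed.
Lemma emb2N (u : g2) : F (- u) = - F u.
Proof. by apply: injective_projections; rewrite /= ?oppr0. Qed.
Lemma emb10 : E 0 = 0 :> G. Proof. by []. Qed.
Lemma emb20 : F 0 = 0 :> G. Proof. by []. Qed.

Hypotheses (ThL : trilinear Th) (ThA : forall a b, Th a a b = 0)
  (Th_g1 : forall a b c, in_g1 a -> in_g1 b -> in_g1 c -> in_g1 (Th a b c))
  (Th_g2 : forall a b c, in_g2 a -> in_g2 b -> in_g2 c -> in_g2 (Th a b c)).

Let hat_Th_hat a b c : hat H (Th (hat H a) (hat H b) (hat H c)) = 0.
Proof. exact/hat_in_g1/Th_g1. Qed.

Lemma twist_transport (K0 : [pchar K] =i pred0) :
  twist Th H = transport (fun a => a + hat H a) (fun r => r - hat H r) Th.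
Proof.
apply: functional_extensionality => a; apply: functional_extensionality => b.
apply: functional_extensionality => c.
exact: exp_br10_transport hat_linear hatK ThL hat_Th_hat K0 a b c.
Qed.

Let Th_F u v w : (Th (F u) (F v) (F w)).1 = 0. Proof. exact: Th_g2. Qed.
Let ThS a b c : Th b a c = - Th a b c.
Proof.
apply/eqP; rewrite -addr_eq0 addrC; have := ThA (a + b) c.
by rewrite (trilinDl ThL) !(trilinDm ThL) !ThA add0r addr0 => ->.
Qed.

Local Arguments emb1 : simpl never.
Local Arguments emb2 : simpl never.

Ltac skew_normalize := repeat match goal with
  | |- context [Th ?A ?B ?C] => match goal with |- context [Th B A C] =>
      tryif constr_eq A B then rewrite (ThA A C) else rewrite (ThS A B C) end end.

Ltac expand_components := rewrite ?pairE;
  rewrite ?(emb1D, emb1N, emb10, emb20, raddf0, raddfD, raddfN,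
            trilinDl ThL, trilinDm ThL, trilinDr ThL, trilinNl ThL, trilinNm ThL,
            trilinNr ThL, trilin0l ThL, trilin0m ThL, trilin0r ThL);
  skew_normalize; rewrite /=;
  rewrite ?(Th_F, emb1D, emb1N, emb10, emb20, raddf0, raddfD, raddfN,
            opprK, oppr0, addr0, add0r).

Lemma l1_restrict x u y v z w :
  l1 Th H (x, u) (y, v) (z, w) = ((br10 Th (hat H) (F u) (F v) (F w)).1, 0).
Proof. rewrite /l1 /br10 /hat /mu2 /=; expand_components; cancel_terms. Qed.

Lemma twist_deg2_psi x u y v z w :
  twist_deg2 (hat H) (psi Th) (x, u) (y, v) (z, w)
  = ((twist_deg2 (hat H) Th (F u) (F v) (F w)).1, 0).
Proof. rewrite /twist_deg2 /hat /psi /=; expand_components; cancel_terms. Qed.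

Lemma twist_deg3_mu1 x u y v z w :
  twist_deg3 (hat H) (mu1 Th) (x, u) (y, v) (z, w)
  = ((twist_deg3 (hat H) Th (F u) (F v) (F w)).1, 0).
Proof. rewrite /twist_deg3 /hat /mu1 /=; expand_components; cancel_terms. Qed.

Ltac vanish_at0_tac := split=> [[? ?] [? ?] | [? ?] [? ?] | [? ?] [? ?]];
  apply: injective_projections;
  rewrite /= ?(emb10, emb20, trilin0l ThL, trilin0m ThL, trilin0r ThL) /=
     ?(addr0, subr0, oppr0).

Lemma mu1_vanish_at0 : vanish_at0 (mu1 Th). Proof. by vanish_at0_tac. Qed.
Lemma psi_vanish_at0 : vanish_at0 (psi Th). Proof. by vanish_at0_tac. Qed.

Lemma l2_restrict x u y v z w :
  l2 Th H H (x, u) (y, v) (z, w) = ((iter 2 (XH H) Th (F u) (F v) (F w)).1, 0).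
Proof.
rewrite -[LHS]/(iter 2 (XH H) (psi Th) (x, u) (y, v) (z, w)).
rewrite (iter2_br10 hat_linear hatK psi_vanish_at0) twist_deg2_psi.
by rewrite (iter2_br10 hat_linear hatK (trilinear_vanish_at0 ThL)) pair_fst_mulrn.
Qed.

Lemma l3_restrict x u y v z w :
  l3 Th H H H (x, u) (y, v) (z, w) = ((iter 3 (XH H) Th (F u) (F v) (F w)).1, 0).
Proof.
rewrite -[LHS]/(iter 3 (XH H) (mu1 Th) (x, u) (y, v) (z, w)).
rewrite (iter3_br10 hat_linear hatK mu1_vanish_at0) twist_deg3_mu1.
by rewrite (iter3_br10 hat_linear hatK (trilinear_vanish_at0 ThL)) pair_fst_mulrn.
Qed.

Lemma maurer_cartan_exprE x u y v z w :
  l1 Th H (x, u) (y, v) (z, w) + (2%:R)^-1 *: l2 Th H H (x, u) (y, v) (z, w)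
    + ((3`!)%:R)^-1 *: l3 Th H H H (x, u) (y, v) (z, w)
  = ((twist Th H (F u) (F v) (F w)).1, 0).
Proof.
rewrite l1_restrict l2_restrict l3_restrict /twist (_ : 3`! = 6)%N //.
rewrite (sum_inv_fact4 (fun k => iter k (XH H) Th (F u) (F v) (F w))).
by apply: injective_projections => /=; rewrite ?Th_F ?add0r ?scaler0 ?addr0.
Qed.

Lemma maurer_cartan_twistP :
  maurer_cartan Th H <-> forall u v w, (twist Th H (F u) (F v) (F w)).1 = 0.
Proof.
split=> [MC u v w | tw0 [x u] [y v] [z w]].
- by have := MC (0, u) (0, v) (0, w); rewrite maurer_cartan_exprE => -[].
- by rewrite maurer_cartan_exprE tw0.
Qed.

End TwilledTwist.

Theorem theorem4p6 (K : fieldType) (hK : [pchar K] =i pred0)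
  (g1 g2 : lmodType K) (Th : tri_op g1 g2) (hTh : twilled Th)
  (H : {linear g2 -> g1}) :
  twilled (twist Th H) <-> maurer_cartan Th H.
Proof.
have [ThLTS [Th_g1 Th_g2]] := hTh; have [ThL [ThA _]] := ThLTS.
have MC_P := maurer_cartan_twistP H ThL ThA Th_g2.2.2.
have twistE := twist_transport H ThL Th_g1.2.2 hK.
split=> [[_ [_ /subalgebra_in_g2P tw0]] | /MC_P tw0]; first exact/MC_P.
split; last split; last exact/subalgebra_in_g2P.
- rewrite twistE; apply: is_LTS_transport ThLTS.
  + exact: idDN_linear (hat_linear H).
  + exact: idBN_linear (hat_linear H).
  + exact: idBNK (hat_linear H) (hatK H).
- by rewrite twistE; apply: subalgebra_in_g1_transport.
Qed.
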